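(* Let $N\ge3$ and $p>p_{\rm S}$. The problem $$y''+\alpha y'-y+y^p+B_0(t)y^p+B_1(t)y=0,\qquad y(t)\to1\ \text{as }t\to-\infty,$$ has a solution defined on $(-\infty,T]$ for some $T\in\mathbb{R}$, and this solution is unique near $t=-\infty$ (any two such solutions coincide on some interval $(-\infty,T']$).
   Context: $p_{\rm S}=\frac{N+2}{N-2}$, $\mu=\frac{2}{p-1}$, $a=\{\mu(N-2-\mu)\}^{\mu/2}$, $m=a^{-(p-1)/2}$, $\alpha=m(N-2-2\mu)$, $q=\frac{N-2}{2}(p-p_{\rm S})$, $B_0(t)=(1+e^{2mt})^q-1$, $B_1(t)=\frac{N(N-2)e^{2mt}}{(1+e^{2mt})^2}$. *)

From Stdlib Require Import Reals Lra.
Open Scope R_scope.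

Definition pS (N : nat) : R := (INR N + 2) / (INR N - 2).
Definition mu (p : R) : R := 2 / (p - 1).
Definition a_const (N : nat) (p : R) : R :=
  Rpower (mu p * (INR N - 2 - mu p)) (mu p / 2).
Definition m_const (N : nat) (p : R) : R :=
  Rpower (a_const N p) (- ((p - 1) / 2)).
Definition alpha_const (N : nat) (p : R) : R :=
  m_const N p * (INR N - 2 - 2 * mu p).
Definition q_const (N : nat) (p : R) : R := (INR N - 2) / 2 * (p - pS N).
Definition B0 (N : nat) (p : R) (t : R) : R :=
  Rpower (1 + exp (2 * m_const N p * t)) (q_const N p) - 1.
Definition B1 (N : nat) (p : R) (t : R) : R :=
  INR N * (INR N - 2) * exp (2 * m_const N p * t)
  / (1 + exp (2 * m_const N p * t)) ^ 2.

(* y^p for real exponent p: Rpower (meaningful for y > 0, which holds near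
   t = -oo since y -> 1). *)
Definition powp (y p : R) : R := Rpower y p.

Definition is_solution (N : nat) (p : R) (y : R -> R) (T : R) : Prop :=
  (exists y1 y2 : R -> R,
     forall t, t <= T ->
       derivable_pt_lim y t (y1 t) /\
       derivable_pt_lim y1 t (y2 t) /\
       y2 t + alpha_const N p * y1 t - y t + powp (y t) p
         + B0 N p t * powp (y t) p + B1 N p t * y t = 0) /\
  (forall eps, 0 < eps -> exists M, forall t, t <= M -> Rabs (y t - 1) < eps).

From Pilot Require Import Defs.
From Coquelicot Require Import Coquelicot.
From Stdlib Require Import Reals Lra Lia.
Open Scope R_scope.

(* The difference [w] of two solutions solves [w'' + alpha w' + g = 0] with
   [g = (p - 1) w + o(w)] as [t -> -oo].  The energy
   [V = w'^2 + alpha w w' + (p - 1 + alpha^2 / 2) w^2] then satisfies [V' <= - kappa V], so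
   [V (t0) <= V (t) exp (kappa (t - t0))] for [t <= t0]; as [w], hence [w'] and [V], stay
   bounded near [-oo], letting [t -> -oo] gives [V (t0) <= 0] and [w = 0].

   With [x = exp (2 m t)], [n = N (N - 2)] and [W = (1 + B0) y^p = (1 + x)^q y^p],
   the problem becomes the system
     [(1 + x)^2 (L y + W) + n x y = 0]   and   [(1 + x) (y D W - p D y W) = q x y W],
   where [D = x d/dx] and [L = 4 m^2 D^2 + 2 m alpha D - 1].  Power series
   [y = sum a_k x^k], [W = sum b_k x^k] with [a_0 = b_0 = 1] solve it: comparing
   coefficients of [x^k] determines [(a_k, b_k)] from the earlier ones, the coefficients
   grow at most geometrically, and the second equation, a first-order linear equation for
   [W], forces [W = (1 + x)^q y^p] because both sides tend to [1] at [x = 0]. *)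

(** * Calculus near [-oo] *)

(* The Stdlib differentiation rules, restated for lambda-terms so that they
   apply without unfolding [plus_fct], [mult_fct], [comp], ... *)
Lemma derivable_pt_lim_plus' f g x a b :
  derivable_pt_lim f x a -> derivable_pt_lim g x b ->
  derivable_pt_lim (fun t => f t + g t) x (a + b).
Proof. exact (derivable_pt_lim_plus f g x a b). Qed.

Lemma derivable_pt_lim_minus' f g x a b :
  derivable_pt_lim f x a -> derivable_pt_lim g x b ->
  derivable_pt_lim (fun t => f t - g t) x (a - b).
Proof. exact (derivable_pt_lim_minus f g x a b). Qed.

Lemma derivable_pt_lim_opp' f x a :
  derivable_pt_lim f x a -> derivable_pt_lim (fun t => - f t) x (- a).
Proof. exact (derivable_pt_lim_opp f x a). Qed.

Lemma derivable_pt_lim_mult' f g x a b :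
  derivable_pt_lim f x a -> derivable_pt_lim g x b ->
  derivable_pt_lim (fun t => f t * g t) x (a * g x + f x * b).
Proof. exact (derivable_pt_lim_mult f g x a b). Qed.

Lemma derivable_pt_lim_scal' c f x a :
  derivable_pt_lim f x a -> derivable_pt_lim (fun t => c * f t) x (c * a).
Proof. exact (derivable_pt_lim_scal f c x a). Qed.

Lemma derivable_pt_lim_comp' f g x a b :
  derivable_pt_lim g x a -> derivable_pt_lim f (g x) b ->
  derivable_pt_lim (fun t => f (g t)) x (b * a).
Proof. exact (derivable_pt_lim_comp g f x a b). Qed.

Lemma derivable_pt_lim_val f x a b :
  a = b -> derivable_pt_lim f x b -> derivable_pt_lim f x a.
Proof. now intros ->. Qed.

Lemma derivable_pt_lim_exp_scal c x :
  derivable_pt_lim (fun t => exp (c * t)) x (c * exp (c * x)).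
Proof.
  apply (derivable_pt_lim_val _ _ _ (exp (c * x) * (c * 1))); [ring|].
  apply (derivable_pt_lim_comp' exp (fun t => c * t)).
  - apply derivable_pt_lim_scal', derivable_pt_lim_id.
  - apply derivable_pt_lim_exp.
Qed.

Lemma le_of_derivable_nonneg f f' a b : a <= b ->
  (forall c, a <= c <= b -> derivable_pt_lim f c (f' c)) ->
  (forall c, a <= c <= b -> 0 <= f' c) -> f a <= f b.
Proof.
  intros Hab Hd Hpos. destruct (Rle_lt_or_eq_dec _ _ Hab) as [Hlt|<-]; [|lra].
  destruct (MVT_cor2 f f' a b Hlt Hd) as [c [Hc Hcab]].
  assert (0 <= f' c) by (apply Hpos; lra). nra.
Qed.

Lemma Rabs_sub_le_of_derivable f f' h h' a b : a <= b ->
  (forall c, a <= c <= b -> derivable_pt_lim f c (f' c)) ->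
  (forall c, a <= c <= b -> derivable_pt_lim h c (h' c)) ->
  (forall c, a <= c <= b -> Rabs (f' c) <= h' c) ->
  Rabs (f b - f a) <= h b - h a.
Proof.
  intros Hab Hf Hh Hle.
  assert (h a - f a <= h b - f b).
  { apply (le_of_derivable_nonneg (fun c => h c - f c) (fun c => h' c - f' c)); auto.
    - intros c Hc. apply derivable_pt_lim_minus'; auto.
    - intros c Hc. specialize (Hle c Hc). apply Rabs_le_between in Hle. lra. }
  assert (h a + f a <= h b + f b).
  { apply (le_of_derivable_nonneg (fun c => h c + f c) (fun c => h' c + f' c)); auto.
    - intros c Hc. apply derivable_pt_lim_plus'; auto.
    - intros c Hc. specialize (Hle c Hc). apply Rabs_le_between in Hle. lra. }
  apply Rabs_le. lra.
Qed.

Lemma eq_of_derivable_zero f a b : a <= b ->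
  (forall c, a <= c <= b -> derivable_pt_lim f c 0) -> f a = f b.
Proof.
  intros Hab Hf.
  assert (H : Rabs (f b - f a) <= 0 - 0).
  { apply (Rabs_sub_le_of_derivable f (fun _ => 0) (fun _ => 0) (fun _ => 0)); auto.
    - intros. apply derivable_pt_lim_const.
    - intros. rewrite Rabs_R0. lra. }
  pose proof (Rabs_pos (f b - f a)).
  assert (f b - f a = 0) by (apply Rabs_eq_0; lra). lra.
Qed.

Definition near_minus_infty (P : R -> Prop) : Prop :=
  exists T, forall t, t <= T -> P t.

Definition lim_minus_infty (f : R -> R) (l : R) : Prop :=
  forall eps, 0 < eps -> near_minus_infty (fun t => Rabs (f t - l) < eps).

Lemma near_minus_infty_and (P Q : R -> Prop) :
  near_minus_infty P -> near_minus_infty Q -> near_minus_infty (fun t => P t /\ Q t).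
Proof.
  intros [T1 H1] [T2 H2]. exists (Rmin T1 T2). intros t Ht. split.
  - apply H1. pose proof (Rmin_l T1 T2). lra.
  - apply H2. pose proof (Rmin_r T1 T2). lra.
Qed.

Lemma near_minus_infty_impl (P Q : R -> Prop) :
  (forall t, P t -> Q t) -> near_minus_infty P -> near_minus_infty Q.
Proof. intros HPQ [T H]. exists T. auto. Qed.

Lemma near_minus_infty_exp_lt c d : 0 < c -> 0 < d ->
  near_minus_infty (fun t => exp (c * t) < d).
Proof.
  intros Hc Hd. exists ((ln d - 1) / c). intros t Ht.
  rewrite <- (exp_ln d) by lra. apply exp_increasing.
  apply (Rmult_le_compat_l c) in Ht; [|lra].
  replace (c * ((ln d - 1) / c)) with (ln d - 1) in Ht by (field; lra). lra.
Qed.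

Lemma lim_minus_infty_comp_exp g c : 0 < c -> continuity_pt g 0 ->
  lim_minus_infty (fun t => g (exp (c * t))) (g 0).
Proof.
  intros Hc Hg eps Heps. destruct (Hg eps Heps) as [d [Hd H]].
  apply (near_minus_infty_impl (fun t => exp (c * t) < d)); [|now apply near_minus_infty_exp_lt].
  intros t Ht. pose proof (exp_pos (c * t)). apply H. split.
  - split; [exact I|lra].
  - simpl. unfold R_dist. rewrite Rminus_0_r, Rabs_pos_eq; lra.
Qed.

Lemma eq_lim_of_derivable_zero f l T : lim_minus_infty f l ->
  (forall t, t <= T -> derivable_pt_lim f t 0) -> forall t, t <= T -> f t = l.
Proof.
  intros Hlim Hf t Ht. apply Rminus_diag_uniq. destruct (Req_dec (f t - l) 0) as [|Hne]; [auto|].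
  exfalso. destruct (Hlim (Rabs (f t - l)) (Rabs_pos_lt _ Hne)) as [M HM].
  set (s := Rmin M t).
  assert (Hs : s <= t) by apply Rmin_r.
  assert (f s = f t) by (apply eq_of_derivable_zero; auto; intros c Hc; apply Hf; lra).
  specialize (HM s (Rmin_l M t)). rewrite H in HM. lra.
Qed.

(** * A damped linear equation *)

Section DampedEquation.
Variables (al T : R) (w w1 g : R -> R).
Hypothesis al_pos : 0 < al.
Hypothesis w_ode : forall t, t <= T ->
  derivable_pt_lim w t (w1 t) /\ derivable_pt_lim w1 t (- al * w1 t - g t).

(* Since [(exp (al t) w1 t)' = - exp (al t) g t], a value [w1 t > c1 / al] would force
   [w1 >= c1 / al] on all of [(-oo, t]], and [w] would leave [[-1, 1]]. *)

Lemma damped_slope_upper c1 : 0 < c1 ->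
  (forall t, t <= T -> Rabs (w t) <= 1) -> (forall t, t <= T -> Rabs (g t) <= c1) ->
  forall t, t <= T -> w1 t <= c1 / al.
Proof.
  intros Hc1 Hw Hg t Ht. apply Rnot_lt_le. intros Hbig.
  set (F := fun u => exp (al * u) * w1 u).
  set (H := fun u => c1 / al * exp (al * u)).
  assert (HF : forall s, s <= t -> Rabs (F t - F s) <= H t - H s).
  { intros s Hs.
    apply (Rabs_sub_le_of_derivable F
      (fun u => al * exp (al * u) * w1 u + exp (al * u) * (- al * w1 u - g u))
      H (fun u => c1 / al * (al * exp (al * u)))); auto.
    - intros c Hc. apply (derivable_pt_lim_mult' (fun u => exp (al * u)) w1).
      + apply derivable_pt_lim_exp_scal.
      + apply w_ode. lra.
    - intros c Hc. apply (derivable_pt_lim_scal' _ (fun u => exp (al * u))).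
      apply derivable_pt_lim_exp_scal.
    - intros c Hc.
      replace (al * exp (al * c) * w1 c + exp (al * c) * (- al * w1 c - g c))
        with (- (exp (al * c) * g c)) by ring.
      rewrite Rabs_Ropp, Rabs_mult, Rabs_pos_eq by (left; apply exp_pos).
      replace (c1 / al * (al * exp (al * c))) with (exp (al * c) * c1) by (field; lra).
      apply Rmult_le_compat_l; [left; apply exp_pos|]. apply Hg. lra. }
  assert (Hslope : forall s, s <= t -> c1 / al <= w1 s).
  { intros s Hs. specialize (HF s Hs). apply Rabs_le_between in HF.
    unfold F, H in HF. pose proof (exp_pos (al * s)). pose proof (exp_pos (al * t)).
    assert (exp (al * t) * (c1 / al) <= exp (al * t) * w1 t) by (apply Rmult_le_compat_l; lra).
    apply (Rmult_le_reg_l (exp (al * s))); lra. }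
  set (s := t - 3 * al / c1).
  assert (Hs : s <= t) by (assert (0 < al / c1) by (apply Rdiv_lt_0_compat; lra); unfold s; lra).
  assert (Hrise : w s + c1 / al * (t - s) <= w t).
  { assert (w s - c1 / al * s <= w t - c1 / al * t); [|lra].
    apply (le_of_derivable_nonneg (fun u => w u - c1 / al * u) (fun u => w1 u - c1 / al * 1)); auto.
    - intros c Hc. apply derivable_pt_lim_minus'.
      + apply w_ode. lra.
      + apply derivable_pt_lim_scal', derivable_pt_lim_id.
    - intros c Hc. specialize (Hslope c ltac:(lra)). lra. }
  assert (c1 / al * (t - s) = 3) by (unfold s; field; lra).
  pose proof (Hw s ltac:(lra)) as Hws. pose proof (Hw t Ht) as Hwt.
  apply Rabs_le_between in Hws. apply Rabs_le_between in Hwt. lra.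
Qed.

End DampedEquation.

Lemma damped_slope_bounded al T w w1 g c1 : 0 < al -> 0 < c1 ->
  (forall t, t <= T ->
     derivable_pt_lim w t (w1 t) /\ derivable_pt_lim w1 t (- al * w1 t - g t)) ->
  (forall t, t <= T -> Rabs (w t) <= 1) -> (forall t, t <= T -> Rabs (g t) <= c1) ->
  forall t, t <= T -> Rabs (w1 t) <= c1 / al.
Proof.
  intros Hal Hc1 Hode Hw Hg t Ht. apply Rabs_le_between. split.
  - enough (- w1 t <= c1 / al) by lra.
    apply (damped_slope_upper al T (fun u => - w u) (fun u => - w1 u) (fun u => - g u));
      auto; intros s Hs.
    + destruct (Hode s Hs) as [H1 H2]. split.
      * now apply derivable_pt_lim_opp'.
      * apply (derivable_pt_lim_val _ _ _ (- (- al * w1 s - g s))); [ring|].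
        now apply derivable_pt_lim_opp'.
    + rewrite Rabs_Ropp. auto.
    + rewrite Rabs_Ropp. auto.
  - now apply (damped_slope_upper al T w w1 g).
Qed.

Lemma nonpos_of_decay V V' k K T : 0 < k ->
  (forall t, t <= T -> derivable_pt_lim V t (V' t)) ->
  (forall t, t <= T -> V' t <= - k * V t) ->
  (forall t, t <= T -> V t <= K) ->
  forall t, t <= T -> V t <= 0.
Proof.
  intros Hk HV Hdecay Hbound t0 Ht0. apply Rnot_lt_le. intros Hpos.
  assert (Hmono : forall s, s <= t0 -> V t0 * exp (k * t0) <= V s * exp (k * s)).
  { intros s Hs.
    enough (- (V s * exp (k * s)) <= - (V t0 * exp (k * t0))) by lra.
    apply (le_of_derivable_nonneg (fun u => - (V u * exp (k * u)))
      (fun u => - (V' u * exp (k * u) + V u * (k * exp (k * u))))); auto.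
    - intros c Hc. apply derivable_pt_lim_opp'.
      apply (derivable_pt_lim_mult' V (fun u => exp (k * u))).
      + apply HV. lra.
      + apply derivable_pt_lim_exp_scal.
    - intros c Hc. pose proof (Hdecay c ltac:(lra)). pose proof (exp_pos (k * c)). nra. }
  pose proof (Hbound t0 Ht0) as HK. pose proof (exp_pos (k * t0)).
  set (d := V t0 * exp (k * t0) / K).
  assert (Hd : 0 < d) by (apply Rdiv_lt_0_compat; nra).
  destruct (near_minus_infty_exp_lt k d Hk Hd) as [s0 Hs0].
  set (s := Rmin s0 t0).
  assert (Hst : s <= t0) by apply Rmin_r.
  assert (Hexp : exp (k * s) < d) by (apply Hs0, Rmin_l).
  pose proof (Hmono s Hst). pose proof (Hbound s ltac:(lra)). pose proof (exp_pos (k * s)).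
  assert (K * d = V t0 * exp (k * t0)) by (unfold d; field; lra).
  nra.
Qed.

Section Energy.
Variables (al c0 dl T : R) (w w1 g : R -> R).
Hypothesis al_pos : 0 < al.
Hypothesis c0_pos : 0 < c0.
Hypothesis dl_nonneg : 0 <= dl.
Hypothesis dl_small : dl * (2 + 2 * al) <= al.
Hypothesis dl_small_c0 : dl * (2 + 2 * al) <= al * c0.
Hypothesis w_ode : forall t, t <= T ->
  derivable_pt_lim w t (w1 t) /\ derivable_pt_lim w1 t (- al * w1 t - g t).
Hypothesis g_near_linear : forall t, t <= T -> Rabs (g t - c0 * w t) <= dl * Rabs (w t).

Definition damped_energy (t : R) : R :=
  w1 t * w1 t + al * (w t * w1 t) + (c0 + al ^ 2 / 2) * (w t * w t).

Definition damped_energy' (t : R) : R :=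
  - al * w1 t ^ 2 - al * c0 * w t ^ 2 - (2 * w1 t + al * w t) * (g t - c0 * w t).

Lemma damped_energy_derivable t : t <= T ->
  derivable_pt_lim damped_energy t (damped_energy' t).
Proof.
  intros Ht. destruct (w_ode t Ht) as [H1 H2].
  eapply derivable_pt_lim_val;
    [|apply derivable_pt_lim_plus'; [apply derivable_pt_lim_plus'|];
      [|apply derivable_pt_lim_scal'|apply derivable_pt_lim_scal'];
      apply derivable_pt_lim_mult'; eauto].
  unfold damped_energy'. field.
Qed.

Lemma damped_energy_lower t : c0 * w t ^ 2 <= damped_energy t.
Proof. unfold damped_energy. pose proof (pow2_ge_0 (w1 t + al / 2 * w t)). nra. Qed.

Definition damped_energy_const : R := 1 + al + c0 + al ^ 2 / 2.

Definition damped_rate : R := al * c0 / (2 * (1 + c0)) / damped_energy_const.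

Lemma damped_energy_upper t : damped_energy t <= damped_energy_const * (w1 t ^ 2 + w t ^ 2).
Proof.
  unfold damped_energy, damped_energy_const.
  pose proof (pow2_ge_0 (w t - w1 t)). pose proof (pow2_ge_0 (w t)).
  assert (0 <= al * (w t - w1 t) ^ 2) by (apply Rmult_le_pos; lra). nra.
Qed.

Lemma damped_energy_dissipation t : t <= T -> damped_energy' t <= - damped_rate * damped_energy t.
Proof.
  intros Ht. unfold damped_rate.
  set (e := al * c0 / (2 * (1 + c0))). set (K := damped_energy_const).
  assert (HK : 0 < K) by (unfold K, damped_energy_const; nra).
  assert (He : 0 < e) by (unfold e; apply Rdiv_lt_0_compat; nra).
  assert (He1 : e <= al / 2).
  { unfold e. apply (Rmult_le_reg_r (2 * (1 + c0))); [lra|]. field_simplify; nra. }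
  assert (He2 : e <= al * c0 / 2).
  { unfold e. apply (Rmult_le_reg_r (2 * (1 + c0))); [lra|]. field_simplify; nra. }
  assert (HeV : e / K * damped_energy t <= e * (w1 t ^ 2 + w t ^ 2)).
  { apply Rle_trans with (e / K * (K * (w1 t ^ 2 + w t ^ 2))).
    - apply Rmult_le_compat_l; [left; apply Rdiv_lt_0_compat; lra|apply damped_energy_upper].
    - right. field. lra. }
  set (a := Rabs (w t)). set (b := Rabs (w1 t)).
  assert (Ha : w t ^ 2 = a ^ 2) by (unfold a; now rewrite pow2_abs).
  assert (Hb : w1 t ^ 2 = b ^ 2) by (unfold b; now rewrite pow2_abs).
  assert (Ha0 : 0 <= a) by apply Rabs_pos. assert (Hb0 : 0 <= b) by apply Rabs_pos.
  assert (Hr : Rabs ((2 * w1 t + al * w t) * (g t - c0 * w t)) <= (2 * b + al * a) * (dl * a)).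
  { rewrite Rabs_mult. apply Rmult_le_compat; try apply Rabs_pos; [|now apply g_near_linear].
    eapply Rle_trans; [apply Rabs_triang|].
    rewrite !Rabs_mult, (Rabs_pos_eq 2), (Rabs_pos_eq al) by lra.
    unfold a, b. lra. }
  apply Rabs_le_between in Hr.
  assert (Hab : 2 * b * a <= a ^ 2 + b ^ 2) by (pose proof (pow2_ge_0 (a - b)); nra).
  assert (dl * (1 + al) <= al * c0 / 2) by nra.
  assert (dl <= al / 2) by nra.
  unfold damped_energy'. rewrite Ha, Hb in *. nra.
Qed.

Theorem damped_linear_zero :
  (forall t, t <= T -> Rabs (w t) <= 1) -> forall t, t <= T -> w t = 0.
Proof.
  intros Hw t Ht.
  assert (Hdl : dl <= 1) by nra.
  assert (Hg : forall s, s <= T -> Rabs (g s) <= c0 + 1).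
  { intros s Hs. pose proof (g_near_linear s Hs). pose proof (Hw s Hs).
    replace (g s) with ((g s - c0 * w s) + c0 * w s) by ring.
    eapply Rle_trans; [apply Rabs_triang|]. rewrite Rabs_mult, (Rabs_pos_eq c0) by lra.
    pose proof (Rabs_pos (w s)). nra. }
  assert (Hslope := damped_slope_bounded al T w w1 g (c0 + 1) al_pos ltac:(lra) w_ode Hw Hg).
  assert (HV : damped_energy t <= 0).
  { apply (nonpos_of_decay damped_energy damped_energy' damped_rate
      (damped_energy_const * (((c0 + 1) / al) ^ 2 + 1)) T); auto.
    - unfold damped_rate, damped_energy_const.
      apply Rdiv_lt_0_compat; [apply Rdiv_lt_0_compat|]; nra.
    - exact damped_energy_derivable.
    - exact damped_energy_dissipation.
    - intros s Hs. eapply Rle_trans; [apply damped_energy_upper|].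
      apply Rmult_le_compat_l; [unfold damped_energy_const; nra|].

      pose proof (Hslope s Hs). pose proof (Hw s Hs).
      rewrite <- (pow2_abs (w1 s)), <- (pow2_abs (w s)).
      apply Rplus_le_compat; [apply pow_incr|rewrite <- (pow1 2); apply pow_incr];
        split; auto using Rabs_pos. }
  pose proof (damped_energy_lower t). apply Rsqr_0_uniq. unfold Rsqr. nra.
Qed.

End Energy.

(** * Uniqueness near [-oo] *)

Lemma Rpower_1_l a : Rpower 1 a = 1.
Proof. unfold Rpower. now rewrite ln_1, Rmult_0_r, exp_0. Qed.

Lemma Rpower_pred z a : 0 < z -> Rpower z (a - 1) = Rpower z a / z.
Proof.
  intros Hz. unfold Rminus. rewrite Rpower_plus, Rpower_Ropp, Rpower_1 by auto. reflexivity.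
Qed.

Lemma Rpower_near_1 a eps : 0 < eps ->
  exists eta, 0 < eta /\ forall x, Rabs (x - 1) < eta -> Rabs (Rpower x a - 1) < eps.
Proof.
  intros Heps.
  assert (Hc : continuity_pt (fun x => Rpower x a) 1).
  { apply derivable_continuous_pt. exists (a * Rpower 1 (a - 1)).
    apply derivable_pt_lim_power. lra. }
  destruct (Hc eps Heps) as [eta [Heta H]]. exists eta. split; [exact Heta|].
  intros x Hx. destruct (Req_dec x 1) as [->|Hne].
  - rewrite Rpower_1_l, Rminus_diag, Rabs_R0. exact Heps.
  - specialize (H x). simpl in H. unfold R_dist in H. rewrite Rpower_1_l in H.
    apply H. split; [split; [exact I|congruence]|exact Hx].
Qed.

(* Mean value theorem applied to [x^p - p x], whose derivative [p (x^(p-1) - 1)]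
   is small near [1]. *)
Lemma Rpower_sub_linear p eps : 0 < eps ->
  exists eta, 0 < eta /\ forall y z, Rabs (y - 1) < eta -> Rabs (z - 1) < eta ->
    Rabs (Rpower y p - Rpower z p - p * (y - z)) <= eps * Rabs (y - z).
Proof.
  intros Heps.
  destruct (Rpower_near_1 (p - 1) (eps / (Rabs p + 1))) as [eta [Heta H]].
  { apply Rdiv_lt_0_compat; [lra|]. pose proof (Rabs_pos p). lra. }
  exists (Rmin eta (1 / 2)). split; [apply Rmin_pos; lra|].
  assert (Hmin := Rmin_l eta (1 / 2)). assert (Hmin' := Rmin_r eta (1 / 2)).
  assert (key : forall y z, z < y -> Rabs (y - 1) < Rmin eta (1 / 2) ->
      Rabs (z - 1) < Rmin eta (1 / 2) ->
      Rabs (Rpower y p - Rpower z p - p * (y - z)) <= eps * Rabs (y - z)).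
  { intros y z Hzy Hy Hz. apply Rabs_lt_between' in Hy. apply Rabs_lt_between' in Hz.
    destruct (MVT_cor2 (fun x => Rpower x p - p * x)
      (fun x => p * Rpower x (p - 1) - p * 1) z y Hzy) as [c [Hc Hcz]].
    { intros c Hc. apply derivable_pt_lim_minus'.
      - apply derivable_pt_lim_power. lra.
      - apply derivable_pt_lim_scal', derivable_pt_lim_id. }
    replace (Rpower y p - Rpower z p - p * (y - z)) with (p * (Rpower c (p - 1) - 1) * (y - z))
      by (simpl in Hc; lra).
    rewrite !Rabs_mult. apply Rmult_le_compat_r; [apply Rabs_pos|].
    assert (Hpc : Rabs (Rpower c (p - 1) - 1) < eps / (Rabs p + 1))
      by (apply H, Rabs_lt_between'; lra).
    pose proof (Rabs_pos p).
    apply Rle_trans with (Rabs p * (eps / (Rabs p + 1))); [apply Rmult_le_compat_l; lra|].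
    apply (Rmult_le_reg_r (Rabs p + 1)); [lra|]. field_simplify; nra. }
  intros y z Hy Hz. destruct (Rtotal_order y z) as [Hlt|[->|Hgt]].
  - replace (Rpower y p - Rpower z p - p * (y - z))
      with (- (Rpower z p - Rpower y p - p * (z - y))) by ring.
    rewrite Rabs_Ropp, (Rabs_minus_sym y z). auto.
  - rewrite !Rminus_diag, Rmult_0_r, Rminus_diag, Rabs_R0. lra.
  - auto.
Qed.

Lemma m_const_pos N p : 0 < m_const N p.
Proof. apply exp_pos. Qed.

Lemma lim_B0 N p : lim_minus_infty (B0 N p) 0.
Proof.
  set (G := fun x => Rpower (1 + x) (q_const N p) - 1).
  replace 0 with (G 0) by (unfold G; rewrite Rplus_0_r, Rpower_1_l; ring).
  apply (lim_minus_infty_comp_exp G (2 * m_const N p)); [pose proof (m_const_pos N p); lra|].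
  apply derivable_continuous_pt. eexists.
  apply derivable_pt_lim_minus'; [|apply derivable_pt_lim_const].
  apply (derivable_pt_lim_comp' (fun z => Rpower z (q_const N p)) (fun x => 1 + x)).
  - apply derivable_pt_lim_plus'; [apply derivable_pt_lim_const|apply derivable_pt_lim_id].
  - apply derivable_pt_lim_power. lra.
Qed.

Lemma lim_B1 N p : lim_minus_infty (Defs.B1 N p) 0.
Proof.
  set (G := fun x => INR N * (INR N - 2) * x / (1 + x) ^ 2).
  replace 0 with (G 0) by (unfold G; field).
  apply (lim_minus_infty_comp_exp G (2 * m_const N p)); [pose proof (m_const_pos N p); lra|].
  unfold G. reg. lra.
Qed.

Lemma pS_gt_1 N : (3 <= N)%nat -> 1 < pS N.
Proof.
  intros HN. apply le_INR in HN. simpl in HN. unfold pS.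
  apply (Rmult_lt_reg_r (INR N - 2)); [lra|]. field_simplify; lra.
Qed.

Lemma alpha_const_pos N p : (3 <= N)%nat -> pS N < p -> 0 < alpha_const N p.
Proof.
  intros HN Hp. pose proof (pS_gt_1 N HN). apply le_INR in HN. simpl in HN.
  apply Rmult_lt_0_compat; [apply m_const_pos|]. unfold mu.
  assert (INR N + 2 < p * (INR N - 2)).
  { unfold pS in Hp. apply (Rmult_lt_compat_r (INR N - 2)) in Hp; [|lra].
    field_simplify in Hp; lra. }
  apply (Rmult_lt_reg_r (p - 1)); [lra|]. field_simplify; lra.
Qed.

Lemma perturbation_le p dl d b0 b1 w : 0 < p -> 0 <= dl ->
  Rabs d <= dl / 4 * Rabs w -> Rabs b0 <= 1 -> p * Rabs b0 + Rabs b1 <= dl / 2 ->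
  Rabs (d + b0 * (d + p * w) + b1 * w) <= dl * Rabs w.
Proof.
  intros Hp Hdl Hd Hb0 Hb.
  pose proof (Rabs_pos w). pose proof (Rabs_pos b0). pose proof (Rabs_pos b1).
  eapply Rle_trans; [apply Rabs_triang|]. eapply Rle_trans; [apply Rplus_le_compat_r, Rabs_triang|].
  rewrite !Rabs_mult.
  assert (Rabs (d + p * w) <= dl / 4 * Rabs w + p * Rabs w).
  { eapply Rle_trans; [apply Rabs_triang|]. rewrite Rabs_mult, (Rabs_pos_eq p) by lra. lra. }
  assert (Rabs b0 * Rabs (d + p * w) <= Rabs b0 * (dl / 4 * Rabs w + p * Rabs w))
    by (apply Rmult_le_compat_l; lra).
  assert (Rabs b0 * (dl / 4 * Rabs w) <= dl / 4 * Rabs w)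
    by (rewrite <- (Rmult_1_l (dl / 4 * Rabs w)) at 2; apply Rmult_le_compat_r; nra).
  assert ((p * Rabs b0 + Rabs b1) * Rabs w <= dl / 2 * Rabs w) by (apply Rmult_le_compat_r; lra).
  nra.
Qed.

Lemma damping_margin al c0 : 0 < al -> 0 < c0 ->
  exists dl, 0 < dl /\ dl * (2 + 2 * al) <= al /\ dl * (2 + 2 * al) <= al * c0.
Proof.
  intros Hal Hc0. exists (al * Rmin 1 c0 / (2 + 2 * al)).
  pose proof (Rmin_l 1 c0). pose proof (Rmin_r 1 c0).
  assert (0 < Rmin 1 c0) by (apply Rmin_pos; lra).
  replace (al * Rmin 1 c0 / (2 + 2 * al) * (2 + 2 * al)) with (al * Rmin 1 c0) by (field; lra).
  repeat split; [apply Rdiv_lt_0_compat; nra|nra|nra].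
Qed.

Lemma is_solution_unique N p y z T1 T2 : 1 < p -> 0 < alpha_const N p ->
  is_solution N p y T1 -> is_solution N p z T2 -> near_minus_infty (fun t => y t = z t).
Proof.
  intros Hp Hal [[y1 [y2 Hy]] Hylim] [[z1 [z2 Hz]] Hzlim].
  set (al := alpha_const N p) in *. set (c0 := p - 1).
  destruct (damping_margin al c0 Hal ltac:(unfold c0; lra)) as (dl & Hdl & Hdl1 & Hdl2).
  destruct
 (Rpower_sub_linear p (dl / 4)) as [eta [Heta Hpow]]; [lra|].
  set (e := Rmin 1 (dl / (2 * (p + 1)))).
  assert (He : 0 < e) by (apply Rmin_pos; [lra|apply Rdiv_lt_0_compat; lra]).
  assert (He1 : e <= 1) by apply Rmin_l.
  assert (He2 : (p + 1) * e <= dl / 2).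
  { apply Rle_trans with ((p + 1) * (dl / (2 * (p + 1)))).
    - apply Rmult_le_compat_l; [lra|apply Rmin_r].
    - right. field. lra. }
  destruct (near_minus_infty_and _ _ (ex_intro _ T1 Hy)
    (near_minus_infty_and _ _ (ex_intro _ T2 Hz)
    (near_minus_infty_and _ _ (Hylim (Rmin eta (1 / 2)) ltac:(apply Rmin_pos; lra))
    (near_minus_infty_and _ _ (Hzlim (Rmin eta (1 / 2)) ltac:(apply Rmin_pos; lra))
    (near_minus_infty_and _ _ (lim_B0 N p e He) (lim_B1 N p e He))))))
    as [T HT].
  exists T. intros t Ht. apply Rminus_diag_uniq. revert t Ht.
  apply (damped_linear_zero al c0 dl T (fun t => y t - z t) (fun t => y1 t - z1 t)
    (fun t => - (y t - z t) + (1 + B0 N p t) * (Rpower (y t) p - Rpower (z t) p)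
              + Defs.B1 N p t * (y t - z t))); auto; try (unfold c0; lra).
  - intros s Hs. destruct (HT s Hs) as ((Hy1 & Hy2 & Hyeq) & (Hz1 & Hz2 & Hzeq) & _).
    split; [now apply derivable_pt_lim_minus'|].
    apply (derivable_pt_lim_val _ _ _ (y2 s - z2 s)); [unfold powp in *; lra|].
    now apply derivable_pt_lim_minus'.
  - intros s Hs. destruct (HT s Hs) as (_ & _ & Hys & Hzs & Hb0 & Hb1).
    rewrite Rminus_0_r in Hb0, Hb1. pose proof (Rmin_l eta (1 / 2)).
    replace (_ - c0 * (y s - z s)) with
      ((Rpower (y s) p - Rpower (z s) p - p * (y s - z s))
       + B0 N p s * ((Rpower (y s) p - Rpower (z s) p - p * (y s - z s)) + p * (y s - z s))
       + Defs.B1 N p s * (y s - z s)) by (unfold c0; ring).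
    apply perturbation_le; try lra.
    + apply Hpow; lra.
    + nra.
  - intros s Hs. destruct (HT s Hs) as (_ & _ & Hys & Hzs & _).
    apply Rabs_lt_between' in Hys. apply Rabs_lt_between' in Hzs.
    pose proof (Rmin_r eta (1 / 2)). apply Rabs_le. split; lra.
Qed.

(** * The power-series solution *)

Section CourseOfValues.
Context {A : Type} (a0 : A) (step : (nat -> A) -> nat -> A).

(* [cov_table k] agrees with the sequence on [0..k]; [a0] is a dummy value. *)
Fixpoint cov_table (k : nat) : nat -> A :=
  match k with
  | O => fun _ => step (fun _ => a0) O
  | S j => fun i => if (i <=? j)%nat then cov_table j i else step (cov_table j) (S j)
  end.

Definition cov_seq (k : nat) : A := cov_table k k.

Lemma cov_table_stable k i : (i <= k)%nat -> cov_table k i = cov_seq i.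
Proof.
  induction k as [|j IH]; intros Hi.
  - now replace i with O by lia.
  - destruct (Nat.le_gt_cases i j) as [Hij|Hij].
    + simpl. rewrite (proj2 (Nat.leb_le i j) Hij). auto.
    + now replace i with (S j) by lia.
Qed.

Hypothesis step_local : forall f g k,
  (forall i, (i < k)%nat -> f i = g i) -> step f k = step g k.

Lemma cov_seq_step k : cov_seq k = step cov_seq k.
Proof.
  destruct k as [|j].
  - apply step_local. lia.
  - unfold cov_seq at 1.
    replace (cov_table (S j) (S j)) with (step (cov_table j) (S j)).
    + apply step_local. intros i Hi. apply cov_table_stable. lia.
    + simpl. destruct j as [|j]; [reflexivity|].
      now rewrite (proj2 (Nat.leb_gt (S j) j)) by lia.
Qed.

End CourseOfValues.

(* Coefficients of [x d/dx] applied to a power series. *)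
Definition euler (c : nat -> R) (k : nat) : R := INR k * c k.

Lemma CV_radius_euler c : CV_radius (euler c) = CV_radius c.
Proof.
  transitivity (CV_radius (PS_incr_1 (PS_derive c))).
  - apply CV_radius_ext. intros [|k]; [|reflexivity].
    change (INR 0 * c 0%nat = 0). simpl. ring.
  - rewrite CV_radius_incr_1. apply CV_radius_derive.
Qed.

Lemma PSeries_euler c x : PSeries (euler c) x = x * PSeries (PS_derive c) x.
Proof.
  rewrite <- PSeries_incr_1. apply PSeries_ext. intros [|k]; [|reflexivity].
  change (INR 0 * c 0%nat = 0). simpl. ring.
Qed.

Lemma derivable_pt_lim_PSeries_exp c m t :
  Rbar_lt (Rabs (exp (2 * m * t))) (CV_radius c) ->
  derivable_pt_lim (fun t => PSeries c (exp (2 * m * t))) t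
    (2 * m * PSeries (euler c) (exp (2 * m * t))).
Proof.
  intros H.
  apply (derivable_pt_lim_val _ _ _
    (PSeries (PS_derive c) (exp (2 * m * t)) * (2 * m * exp (2 * m * t))));
    [rewrite PSeries_euler; ring|].
  apply (derivable_pt_lim_comp' (PSeries c) (fun t => exp (2 * m * t))).
  - apply derivable_pt_lim_exp_scal.
  - now apply is_derive_Reals, is_derive_PSeries.
Qed.

Lemma CV_radius_ge_geometric c K M : 0 < M ->
  (forall k, Rabs (c k) <= K * M ^ k) -> Rbar_le (/ M) (CV_radius c).
Proof.
  intros HM H. apply (CV_radius_bounded c). exists K. intros k.
  rewrite Rabs_mult, <- RPow_abs, (Rabs_pos_eq (/ M)) by (left; apply Rinv_0_lt_compat; lra).
  rewrite pow_inv. pose proof (pow_lt M k HM).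
  apply (Rmult_le_reg_r (M ^ k)); [lra|].
  rewrite Rmult_assoc, Rinv_l, Rmult_1_r by lra. apply H.
Qed.

(* [R]-specialized forms of the Coquelicot rules, with an explicit shift in place of
   [PS_incr_1]. *)
Lemma is_pseries_plus' a b x la lb : is_pseries a x la -> is_pseries b x lb ->
  is_pseries (fun k => a k + b k) x (la + lb).
Proof. exact (is_pseries_plus a b x la lb). Qed.

Lemma is_pseries_scal' c a x la : is_pseries a x la ->
  is_pseries (fun k => c * a k) x (c * la).
Proof. exact (is_pseries_scal c a x la (Rmult_comm _ _)). Qed.

Lemma is_pseries_incr_1' a x la : is_pseries a x la ->
  is_pseries (fun k => match k with O => 0 | S j => a j end) x (x * la).
Proof. exact (is_pseries_incr_1 a x la). Qed.

Lemma is_pseries_PSeries c x : Rbar_lt (Rabs x) (CV_radius c) -> is_pseries c x (PSeries c x).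
Proof. intros H. now apply PSeries_correct, CV_radius_inside. Qed.

Lemma is_pseries_0 c x l : is_pseries c x l -> (forall k, c k = 0) -> l = 0.
Proof.
  intros H H0. apply is_pseries_unique in H. rewrite <- H.
  rewrite (PSeries_ext c (fun _ => 0)) by auto. apply PSeries_const_0.
Qed.

Section PowerSeriesSolution.
Variables m al n q p : R.

(* [symbol k] is the value at [x^k] of [L = 4 m^2 (x d/dx)^2 + 2 m al (x d/dx) - 1],
   the operator [y'' + al y' - y] in the variable [x = exp (2 m t)]. *)
Definition symbol (k : nat) : R := 4 * m ^ 2 * INR k ^ 2 + 2 * m * al * INR k - 1.

(* Coefficients of [L y + W] and of [y (x W') - p (x y') W] for [y = sum a_k x^k],
   [W = sum b_k x^k]. *)
Definition lin_coef (a b : nat -> R) (k : nat) : R := symbol k * a k + b k.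

Definition wr_coef (a b : nat -> R) (k : nat) : R :=
  sum_f_R0 (fun i => (INR (k - i) - p * INR i) * a i * b (k - i)%nat) k.

(* The terms of [wr_coef a b k] not involving [a k] or [b k]. *)
Definition wr_inner (a b : nat -> R) (k : nat) : R :=
  sum_f_R0 (fun i => if Nat.eqb i 0 then 0
                     else (INR (k - i) - p * INR i) * a i * b (k - i)%nat) (pred k).

Definition lin_rhs (a b : nat -> R) (j : nat) : R :=
  - (2 * lin_coef a b j + match j with O => 0 | S i => lin_coef a b i end + n * a j).

Definition wr_rhs (a b : nat -> R) (k : nat) : R :=
  (q * PS_mult a b (pred k) - wr_coef a b (pred k) - wr_inner a b k) / INR k.

(* Step [k] solves for [(a_k, b_k)] the identities between the coefficients of [x^k] in
   the two equations ([lin_coef_succ], [wr_coef_succ]); they are linear in [(a_k, b_k)]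
   because [a_0 = b_0 = 1]. *)
Definition coef_step (f : nat -> R * R) (k : nat) : R * R :=
  match k with
  | O => (1, 1)
  | S j =>
      let a := fun i => fst (f i) in let b := fun i => snd (f i) in
      let ak := (lin_rhs a b j - wr_rhs a b (S j)) / (symbol (S j) + p) in
      (ak, p * ak + wr_rhs a b (S j))
  end.

Lemma coef_step_local f g k : (forall i, (i < k)%nat -> f i = g i) ->
  coef_step f k = coef_step g k.
Proof.
  intros H. destruct k as [|j]; [reflexivity|].
  set (a := fun i => fst (f i)). set (b := fun i => snd (f i)).
  set (a' := fun i => fst (g i)). set (b' := fun i => snd (g i)).
  assert (Hab : forall i, (i <= j)%nat -> a i = a' i /\ b i = b' i).
  { intros i Hi. unfold a, b, a', b'. rewrite (H i) by lia. auto. }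
  assert (HL : lin_rhs a b j = lin_rhs a' b' j).
  { unfold lin_rhs, lin_coef. destruct j as [|i].
    - destruct (Hab O (le_n _)) as [-> ->]. reflexivity.
    - destruct (Hab (S i) (le_n _)) as [-> ->]. destruct (Hab i ltac:(lia)) as [-> ->].
      reflexivity. }
  assert (HW : wr_rhs a b (S j) = wr_rhs a' b' (S j)).
  { unfold wr_rhs, wr_coef, wr_inner, PS_mult. simpl pred. f_equal. f_equal. f_equal.
    - f_equal. apply sum_eq. intros i Hi.
      destruct (Hab i Hi) as [-> _]. now destruct (Hab (j - i)%nat ltac:(lia)) as [_ ->].
    - apply sum_eq. intros i Hi.
      destruct (Hab i Hi) as [-> _]. now destruct (Hab (j - i)%nat ltac:(lia)) as [_ ->].
    - apply sum_eq. intros i Hi. destruct (Nat.eqb_spec i 0) as [_|Hi0]; [reflexivity|].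
      destruct (Hab i Hi) as [-> _]. now destruct (Hab (S j - i)%nat ltac:(lia)) as [_ ->]. }
  simpl. fold a b a' b'. now rewrite HL, HW.
Qed.

Definition coef_a (k : nat) : R := fst (cov_seq (1, 1) coef_step k).
Definition coef_b (k : nat) : R := snd (cov_seq (1, 1) coef_step k).

Lemma coef_a_0 : coef_a 0 = 1.
Proof. reflexivity. Qed.

Lemma coef_b_0 : coef_b 0 = 1.
Proof. reflexivity. Qed.

Lemma coef_succ j :
  coef_a (S j) = (lin_rhs coef_a coef_b j - wr_rhs coef_a coef_b (S j)) / (symbol (S j) + p) /\
  coef_b (S j) = p * coef_a (S j) + wr_rhs coef_a coef_b (S j).
Proof.
  unfold coef_a, coef_b. rewrite (cov_seq_step _ _ coef_step_local (S j)). split; reflexivity.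
Qed.

Lemma sum_f_R0_split_0 (F : nat -> R) (j : nat) :
  sum_f_R0 F j = F 0%nat + sum_f_R0 (fun i => if Nat.eqb i 0 then 0 else F i) j.
Proof.
  induction j as [|j IH].
  - simpl. ring.
  - rewrite !tech5, IH. simpl. ring.
Qed.

Lemma wr_coef_split a b j : a 0%nat = 1 -> b 0%nat = 1 ->
  wr_coef a b (S j) = INR (S j) * (b (S j) - p * a (S j)) + wr_inner a b (S j).
Proof.
  intros Ha Hb. unfold wr_coef, wr_inner. rewrite tech5, sum_f_R0_split_0. simpl pred.
  rewrite Nat.sub_diag, Hb, Nat.sub_0_r, Ha. simpl (INR 0). ring.
Qed.

Hypothesis m_pos : 0 < m.
Hypothesis al_nonneg : 0 <= al.
Hypothesis p_gt_1 : 1 < p.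
Hypothesis n_nonneg : 0 <= n.

Lemma symbol_lower k : 4 * m ^ 2 * INR k ^ 2 <= symbol k + p.
Proof.
  unfold symbol. pose proof (pos_INR k).
  assert (0 <= m * al * INR k) by (apply Rmult_le_pos; [nra|lra]). lra.
Qed.

Lemma symbol_add_pos k : 0 < symbol k + p.
Proof.
  unfold symbol. pose proof (pos_INR k).
  assert (0 <= m * al * INR k) by (apply Rmult_le_pos; [nra|lra]).
  assert (0 <= m ^ 2 * INR k ^ 2) by (apply Rmult_le_pos; nra). lra.
Qed.

Lemma lin_coef_0 : lin_coef coef_a coef_b 0 = 0.
Proof. unfold lin_coef, symbol. rewrite coef_a_0, coef_b_0. simpl. ring. Qed.

Lemma wr_coef_0 : wr_coef coef_a coef_b 0 = 0.
Proof. unfold wr_coef. simpl. ring. Qed.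

Lemma lin_coef_succ j : lin_coef coef_a coef_b (S j) = lin_rhs coef_a coef_b j.
Proof.
  destruct (coef_succ j) as [Ha Hb]. unfold lin_coef. rewrite Hb, Ha.
  pose proof (symbol_add_pos (S j)). field. lra.
Qed.

Lemma wr_coef_succ j :
  wr_coef coef_a coef_b (S j) = q * PS_mult coef_a coef_b j - wr_coef coef_a coef_b j.
Proof.
  rewrite wr_coef_split by reflexivity.
  destruct (coef_succ j) as [_ Hb]. rewrite Hb.
  unfold wr_rhs. simpl pred. pose proof (pos_INR j). rewrite S_INR. field. lra.
Qed.

Definition weight (i : nat) : R := / (INR i + 1) ^ 2.

Lemma weight_pos i : 0 < weight i.
Proof. unfold weight. apply Rinv_0_lt_compat. pose proof (pos_INR i). nra. Qed.

Lemma weight_le_1 i : weight i <= 1.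
Proof.
  unfold weight. pose proof (pos_INR i). rewrite <- Rinv_1.
  apply Rinv_le_contravar; nra.
Qed.

Definition symbol_const : R := 4 * m ^ 2 + 2 * m * al + 1.

Lemma symbol_weight i : Rabs (symbol i) * weight i <= symbol_const.
Proof.
  unfold weight, symbol_const. pose proof (pos_INR i).
  assert (0 <= m * al) by nra. assert (0 <= m * al * INR i) by (apply Rmult_le_pos; lra).
  apply (Rmult_le_reg_r ((INR i + 1) ^ 2)); [nra|].
  rewrite Rmult_assoc, Rinv_l, Rmult_1_r by nra.
  unfold symbol. apply Rabs_le. nra.
Qed.

(* Telescoping against [1 / (i + 1) - 1 / (i + 2)]. *)
Lemma sum_weight_le N : sum_f_R0 weight N <= 2 - / (INR N + 1).
Proof.
  induction N as [|N IH].
  - simpl. unfold weight. simpl. lra.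
  - rewrite tech5. unfold weight in *. rewrite S_INR. pose proof (pos_INR N).
    assert (/ (INR N + 1 + 1) ^ 2 + / (INR N + 1 + 1) <= / (INR N + 1)).
    { apply (Rmult_le_reg_r ((INR N + 1 + 1) ^ 2 * (INR N + 1))); [nra|].
      field_simplify; nra. }
    lra.
Qed.

Lemma sum_f_R0_weighted_le (F : nat -> R) (c : R) (N : nat) : 0 <= c ->
  (forall i, (i <= N)%nat -> Rabs (F i) <= c * weight i) -> Rabs (sum_f_R0 F N) <= 2 * c.
Proof.
  intros Hc H. eapply Rle_trans; [apply sum_f_R0_triangle|].
  eapply Rle_trans; [apply (sum_Rle _ (fun i => c * weight i)); auto|].
  replace (sum_f_R0 (fun i => c * weight i) N) with (c * sum_f_R0 weight N)
    by (rewrite scal_sum; apply sum_eq; intros; ring).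
  pose proof (sum_weight_le N). pose proof (pos_INR N).
  assert (0 < / (INR N + 1)) by (apply Rinv_0_lt_compat; lra).
  rewrite (Rmult_comm 2). apply Rmult_le_compat_l; lra.
Qed.

Lemma wr_factor_le j i : (i <= j)%nat -> Rabs (INR (j - i) - p * INR i) <= (1 + p) * INR j.
Proof.
  intros Hi. rewrite minus_INR by auto. pose proof (pos_INR i). apply le_INR in Hi.
  apply Rabs_le. split; nra.
Qed.

Section Bounds.
Variables A B M : R.
Hypothesis A_nonneg : 0 <= A.
Hypothesis B_ge_1 : 1 <= B.
Hypothesis M_ge_1 : 1 <= M.

(* [weight i] compensates the growth [symbol i ~ i^2] in [lin_coef] and keeps the
   convolutions summable; with the exponent [i - 1], a product of two coefficients of
   positive index gains a factor [M], which is what closes the induction. *)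
Definition coef_bounded (k : nat) : Prop := forall i, (1 <= i <= k)%nat ->
  Rabs (coef_a i) <= A * M ^ (i - 1) * weight i /\ Rabs (coef_b i) <= B * M ^ (i - 1).

Lemma pow_M_pos i : 0 < M ^ i.
Proof. apply pow_lt. lra. Qed.

Lemma pow_M_le i j : (i <= j)%nat -> M ^ i <= M ^ j.
Proof. intros. now apply Rle_pow. Qed.

Lemma prod_coef_inner_le J i l : coef_bounded J -> (1 <= i <= J)%nat -> (1 <= l <= J)%nat ->
  Rabs (coef_a i * coef_b l) <= A * B * M ^ (i + l - 2) * weight i.
Proof.
  intros H Hi Hl. destruct (H i Hi) as [Hai _]. destruct (H l Hl) as [_ Hbl].
  rewrite Rabs_mult. replace (i + l - 2)%nat with ((i - 1) + (l - 1))%nat by lia.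
  rewrite pow_add. pose proof (weight_pos i). pose proof (pow_M_pos (i - 1)).
  pose proof (pow_M_pos (l - 1)).
  apply Rle_trans with ((A * M ^ (i - 1) * weight i) * (B * M ^ (l - 1)));
    [apply Rmult_le_compat; auto using Rabs_pos|right; ring].
Qed.

Lemma prod_coef_le j i : (1 <= j)%nat -> coef_bounded j -> (i <= j)%nat ->
  Rabs (coef_a i * coef_b (j - i)%nat) <= (B + A * B) * M ^ (j - 1) * weight i.
Proof.
  intros Hj H Hi. pose proof (pow_M_pos (j - 1)). pose proof (weight_pos i).
  assert (0 <= A * B) by nra.
  destruct (Nat.eq_dec i 0) as [->|Hi0].
  - rewrite coef_a_0, Rmult_1_l, Nat.sub_0_r. destruct (H j ltac:(lia)) as [_ Hb].
    unfold weight. simpl INR. replace (/ (0 + 1) ^ 2) with 1 by (simpl; field).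
    assert (0 <= A * B * M ^ (j - 1)) by nra. nra.
  - destruct (Nat.eq_dec i j) as [->|Hij].
    + rewrite Nat.sub_diag, coef_b_0, Rmult_1_r. destruct (H j ltac:(lia)) as [Ha _].
      assert (0 <= M ^ (j - 1) * weight j) by (apply Rmult_le_pos; lra).
      assert (0 <= (B - 1) * (A * (M ^ (j - 1) * weight j)))
        by (apply Rmult_le_pos; [lra|apply Rmult_le_pos; lra]).
      assert (0 <= B * (M ^ (j - 1) * weight j)) by nra.
      nra.
    + eapply Rle_trans; [apply (prod_coef_inner_le j); auto; lia|].
      replace (i + (j - i) - 2)%nat with (j - 2)%nat by lia.
      assert (M ^ (j - 2) <= M ^ (j - 1)) by (apply pow_M_le; lia).
      assert (A * B * M ^ (j - 2) * weight i <= A * B * M ^ (j - 1) * weight i)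
        by (apply Rmult_le_compat_r; [lra|]; apply Rmult_le_compat_l; auto).
      assert (0 <= B * M ^ (j - 1) * weight i) by (apply Rmult_le_pos; nra). nra.
Qed.

Lemma PS_mult_coef_le j : (1 <= j)%nat -> coef_bounded j ->
  Rabs (PS_mult coef_a coef_b j) <= 2 * ((B + A * B) * M ^ (j - 1)).
Proof.
  intros Hj H. apply sum_f_R0_weighted_le.
  - pose proof (pow_M_pos (j - 1)). assert (0 <= A * B) by nra. nra.
  - intros i Hi. now apply prod_coef_le.
Qed.

Lemma wr_coef_le j : (1 <= j)%nat -> coef_bounded j ->
  Rabs (wr_coef coef_a coef_b j) <= 2 * ((1 + p) * INR j * (B + A * B) * M ^ (j - 1)).
Proof.
  intros Hj H. pose proof (pos_INR j). pose proof (pow_M_pos (j - 1)).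
  assert (0 <= A * B) by nra.
  apply sum_f_R0_weighted_le.
  - repeat apply Rmult_le_pos; nra.
  - intros i Hi. rewrite Rmult_assoc, Rabs_mult.
    replace ((1 + p) * INR j * (B + A * B) * M ^ (j - 1) * weight i)
      with (((1 + p) * INR j) * ((B + A * B) * M ^ (j - 1) * weight i)) by ring.
    apply Rmult_le_compat; auto using Rabs_pos, wr_factor_le, prod_coef_le.
Qed.

Lemma wr_inner_le k : (2 <= k)%nat -> coef_bounded (pred k) ->
  Rabs (wr_inner coef_a coef_b k) <= 2 * ((1 + p) * INR k * (A * B) * M ^ (k - 2)).
Proof.
  intros Hk H. pose proof (pos_INR k). pose proof (pow_M_pos (k - 2)).
  assert (0 <= A * B) by nra.
  apply sum_f_R0_weighted_le.
  - repeat apply Rmult_le_pos; nra.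
  - intros i Hi. pose proof (weight_pos i).
    destruct (Nat.eqb_spec i 0) as [_|Hi0].
    + rewrite Rabs_R0. repeat apply Rmult_le_pos; nra.
    + rewrite Rmult_assoc, Rabs_mult.
      replace ((1 + p) * INR k * (A * B) * M ^ (k - 2) * weight i)
        with (((1 + p) * INR k) * (A * B * M ^ (i + (k - i) - 2) * weight i))
        by (replace (i + (k - i) - 2)%nat with (k - 2)%nat by lia; ring).
      apply Rmult_le_compat; auto using Rabs_pos.
      * apply wr_factor_le. lia.
      * apply (prod_coef_inner_le (pred k)); auto; lia.
Qed.

Lemma lin_coef_le i : coef_bounded i -> (1 <= i)%nat ->
  Rabs (lin_coef coef_a coef_b i) <= (symbol_const * A + B) * M ^ (i - 1).
Proof.
  intros H Hi. destruct (H i ltac:(lia)) as [Ha Hb]. unfold lin_coef.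
  eapply Rle_trans; [apply Rabs_triang|]. rewrite Rabs_mult.
  pose proof (symbol_weight i). pose proof (pow_M_pos (i - 1)).
  assert (Rabs (symbol i) * Rabs (coef_a i) <= Rabs (symbol i) * (A * M ^ (i - 1) * weight i))
    by (apply Rmult_le_compat_l; auto using Rabs_pos).
  assert (Rabs (symbol i) * weight i * (A * M ^ (i - 1)) <= symbol_const * (A * M ^ (i - 1)))
    by (apply Rmult_le_compat_r; [nra|auto]).
  nra.
Qed.

End Bounds.

Lemma coef_a_le k : (1 <= k)%nat ->
  Rabs (coef_a k) <= (Rabs (lin_rhs coef_a coef_b (pred k)) + Rabs (wr_rhs coef_a coef_b k))
                     / (4 * m ^ 2 * INR k ^ 2).
Proof.
  intros Hk. destruct k as [|j]; [lia|]. destruct (coef_succ j) as [Ha _]. rewrite Ha.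
  simpl pred. pose proof (symbol_lower (S j)) as Hs. rewrite S_INR in *. pose proof (pos_INR j).
  assert (0 < 4 * m ^ 2 * (INR j + 1) ^ 2) by (apply Rmult_lt_0_compat; nra).
  unfold Rdiv. rewrite Rabs_mult, Rabs_inv, (Rabs_pos_eq (symbol (S j) + p)) by lra.
  apply Rmult_le_compat; auto using Rabs_pos.
  - left. apply Rinv_0_lt_compat. lra.
  - eapply Rle_trans; [apply Rabs_triang|]. now rewrite Rabs_Ropp.
  - apply Rinv_le_contravar; lra.
Qed.

Lemma coef_b_le k : (1 <= k)%nat ->
  Rabs (coef_b k) <= p * Rabs (coef_a k) + Rabs (wr_rhs coef_a coef_b k).
Proof.
  intros Hk. destruct k as [|j]; [lia|]. destruct (coef_succ j) as [_ Hb]. rewrite Hb.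
  eapply Rle_trans; [apply Rabs_triang|]. rewrite Rabs_mult, (Rabs_pos_eq p) by lra. lra.
Qed.

(* [bound_a] makes the first coefficient fit ([coef_bounded_1]); [growth] dominates the
   constants of [lin_rhs_le] and [wr_rhs_le], which is what closes the induction. *)
Definition bound_a : R := (n + Rabs q + 1) / m ^ 2.
Definition bound_b : R := p * bound_a + Rabs q + 1.
Definition mult_const : R := 2 * (bound_b + bound_a * bound_b).
Definition lin_const : R := 3 * (symbol_const * bound_a + bound_b) + n * bound_a.
Definition wr_const : R :=
  Rabs q * mult_const + (1 + p) * mult_const + 2 * (1 + p) * bound_a * bound_b.
Definition growth : R := 1 + lin_const + wr_const.

Lemma bound_consts :
  0 < bound_a /\ 1 <= bound_b /\ 0 <= symbol_const /\ 0 <= mult_const /\ 0 <= lin_const /\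
  0 <= wr_const /\ 1 <= growth /\ lin_const + wr_const <= growth /\
  m ^ 2 * bound_a = n + Rabs q + 1.
Proof.
  pose proof (Rabs_pos q).
  assert (HA : 0 < bound_a) by (apply Rdiv_lt_0_compat; nra).
  assert (HB : 1 <= bound_b) by (unfold bound_b; nra).
  assert (HL : 0 <= symbol_const) by (unfold symbol_const; assert (0 <= m * al) by nra; nra).
  assert (HC : 0 <= mult_const) by (unfold mult_const; nra).
  assert (HE : 0 <= lin_const) by (unfold lin_const; nra).
  assert (HG : 0 <= wr_const) by (unfold wr_const; assert (0 <= bound_a * bound_b) by nra; nra).
  unfold growth. repeat split; try lra.
  unfold bound_a. field. lra.
Qed.

Lemma wr_rhs_le j : coef_bounded bound_a bound_b growth (S j) ->
  Rabs (wr_rhs coef_a coef_b (S (S j))) <= wr_const * growth ^ j.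
Proof.
  destruct bound_consts as (HA & HB & HL & HC & HE & HG & HM & HMs & HmA).
  intros H. unfold wr_rhs. simpl pred.
  pose proof (PS_mult_coef_le bound_a bound_b growth ltac:(lra) HB HM (S j) ltac:(lia) H) as Hc.
  pose proof (wr_coef_le bound_a bound_b growth ltac:(lra) HB HM (S j) ltac:(lia) H) as Hw.
  pose proof (wr_inner_le bound_a bound_b growth ltac:(lra) HB HM (S (S j)) ltac:(lia) H) as Hi.
  replace (S j - 1)%nat with j in Hc, Hw by lia. replace (S (S j) - 2)%nat with j in Hi by lia.
  fold mult_const in Hc. rewrite !S_INR in *.
  pose proof (pos_INR j). pose proof (pow_M_pos growth HM j).
  unfold Rdiv. rewrite Rabs_mult, Rabs_inv, (Rabs_pos_eq (INR j + 1 + 1)) by lra.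
  apply (Rmult_le_reg_r (INR j + 1 + 1)); [lra|].
  rewrite Rmult_assoc, Rinv_l, Rmult_1_r by lra.
  eapply Rle_trans; [apply Rabs_triang|].
  eapply Rle_trans; [apply Rplus_le_compat_r, Rabs_triang|].
  rewrite !Rabs_Ropp, Rabs_mult.
  pose proof (Rabs_pos q).
  assert (Rabs q * Rabs (PS_mult coef_a coef_b (S j)) <= Rabs q * (mult_const * growth ^ j))
    by (apply Rmult_le_compat_l; [lra|unfold mult_const; lra]).
  assert (Rabs q * mult_const * growth ^ j * 1
          <= Rabs q * mult_const * growth ^ j * (INR j + 1 + 1))
    by (apply Rmult_le_compat_l; [apply Rmult_le_pos; nra|lra]).
  assert ((1 + p) * mult_const * growth ^ j * (INR j + 1)
          <= (1 + p) * mult_const * growth ^ j * (INR j + 1 + 1))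
    by (apply Rmult_le_compat_l; [apply Rmult_le_pos; nra|lra]).
  unfold wr_const. unfold mult_const in *. lra.
Qed.

Lemma lin_rhs_le j : coef_bounded bound_a bound_b growth (S j) ->
  Rabs (lin_rhs coef_a coef_b (S j)) <= lin_const * growth ^ j.
Proof.
  destruct bound_consts as (HA & HB & HL & HC & HE & HG & HM & HMs & HmA).
  intros H. unfold lin_rhs. rewrite Rabs_Ropp.
  pose proof (lin_coef_le bound_a bound_b growth ltac:(lra) HM (S j) H ltac:(lia)) as Hl.
  replace (S j - 1)%nat with j in Hl by lia.
  pose proof (pow_M_pos growth HM j).
  assert (Hl' : Rabs (lin_coef coef_a coef_b j) <= (symbol_const * bound_a + bound_b) * growth ^ j).
  { destruct j as [|j].
    - rewrite lin_coef_0, Rabs_R0. apply Rmult_le_pos; nra.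
    - eapply Rle_trans.
      { apply (lin_coef_le bound_a bound_b growth ltac:(lra) HM (S j));
          [intros i Hi; apply H|]; lia. }
      apply Rmult_le_compat_l; [nra|]. apply pow_M_le; auto; lia. }
  destruct (H (S j) ltac:(lia)) as [Ha _]. replace (S j - 1)%nat with j in Ha by lia.
  pose proof (weight_le_1 (S j)).
  assert (Rabs (coef_a (S j)) <= bound_a * growth ^ j).
  { eapply Rle_trans; [apply Ha|]. rewrite <- (Rmult_1_r (bound_a * growth ^ j)) at 2.
    apply Rmult_le_compat_l; [apply Rmult_le_pos|]; lra. }
  eapply Rle_trans; [apply Rabs_triang|]. rewrite Rabs_mult, (Rabs_pos_eq n) by lra.
  eapply Rle_trans; [apply Rplus_le_compat_r, Rabs_triang|].
  rewrite Rabs_mult, (Rabs_pos_eq 2) by lra.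
  assert (n * Rabs (coef_a (S j)) <= n * (bound_a * growth ^ j)) by (apply Rmult_le_compat_l; auto).
  unfold lin_const. nra.
Qed.

Lemma coef_bounded_1 : coef_bounded bound_a bound_b growth 1.
Proof.
  destruct bound_consts as (HA & HB & HL & HC & HE & HG & HM & HMs & HmA).
  intros i Hi. replace i with 1%nat by lia. simpl (1 - 1)%nat. rewrite pow_O.
  assert (Hlin : lin_rhs coef_a coef_b 0 = - n)
    by (unfold lin_rhs; rewrite lin_coef_0, coef_a_0; ring).
  assert (Hwr : wr_rhs coef_a coef_b 1 = q).
  { unfold wr_rhs, wr_coef, wr_inner, PS_mult. simpl. rewrite coef_a_0, coef_b_0. field. }
  pose proof (Rabs_pos q).
  assert (Ha : Rabs (coef_a 1) <= bound_a * 1 * weight 1).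
  { eapply Rle_trans; [apply coef_a_le; lia|]. simpl pred.
    rewrite Hlin, Hwr, Rabs_Ropp, (Rabs_pos_eq n) by lra.
    unfold weight. simpl INR. apply (Rmult_le_reg_r (4 * m ^ 2)); [nra|].
    field_simplify; nra. }
  split; [exact Ha|].
  eapply Rle_trans; [apply coef_b_le; lia|]. rewrite Hwr.
  pose proof (weight_le_1 1). pose proof (weight_pos 1).
  assert (p * Rabs (coef_a 1) <= p * bound_a) by (apply Rmult_le_compat_l; nra).
  unfold bound_b. lra.
Qed.

Lemma coef_bounded_succ j :
  coef_bounded bound_a bound_b growth (S j) -> coef_bounded bound_a bound_b growth (S (S j)).
Proof.
  destruct bound_consts as (HA & HB & HL & HC & HE & HG & HM & HMs & HmA).
  intros H i Hi. destruct (Nat.le_gt_cases i (S j)) as [Hij|Hij]; [apply H; lia|].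
  replace i with (S (S j)) by lia. replace (S (S j) - 1)%nat with (S j) by lia. simpl pow.
  pose proof (lin_rhs_le j H) as Hlin. pose proof (wr_rhs_le j H) as Hwr.
  pose proof (pow_M_pos growth HM j) as HMj. pose proof (pos_INR j).
  pose proof (weight_le_1 (S (S j))). pose proof (weight_pos (S (S j))).
  assert (Ha : Rabs (coef_a (S (S j))) <= bound_a * (growth * growth ^ j) * weight (S (S j))).
  { eapply Rle_trans; [apply coef_a_le; lia|]. simpl pred.
    unfold weight. rewrite !S_INR.
    apply Rle_trans with ((lin_const + wr_const) * growth ^ j / (4 * m ^ 2 * (INR j + 1 + 1) ^ 2)).
    { unfold Rdiv. apply Rmult_le_compat_r; [|lra].
      left. apply Rinv_0_lt_compat. apply Rmult_lt_0_compat; nra. }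
    assert (Hsq : (INR j + 1 + 1 + 1) ^ 2 <= 4 * (INR j + 1 + 1) ^ 2) by nra.
    assert (HCM : lin_const + wr_const <= m ^ 2 * bound_a * growth)
      by (rewrite HmA; pose proof (Rabs_pos q); nra).
    apply (Rmult_le_reg_r (4 * m ^ 2 * (INR j + 1 + 1) ^ 2 * (INR j + 1 + 1 + 1) ^ 2));
      [apply Rmult_lt_0_compat; [apply Rmult_lt_0_compat|]; nra|].
    field_simplify; [|nra|nra].
    assert (0 <= m ^ 2 * bound_a * growth * growth ^ j)
      by (apply Rmult_le_pos; [apply Rmult_le_pos|]; nra).
    assert ((lin_const + wr_const) * growth ^ j <= m ^ 2 * bound_a * growth * growth ^ j)
      by (apply Rmult_le_compat_r; lra).
    nra. }
  split; [exact Ha|].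
  eapply Rle_trans; [apply coef_b_le; lia|].
  assert (Rabs (coef_a (S (S j))) <= bound_a * (growth * growth ^ j)).
  { eapply Rle_trans; [apply Ha|]. rewrite <- (Rmult_1_r (bound_a * (growth * growth ^ j))) at 2.
    apply Rmult_le_compat_l; [apply Rmult_le_pos; nra|lra]. }
  assert (p * Rabs (coef_a (S (S j))) <= p * (bound_a * (growth * growth ^ j)))
    by (apply Rmult_le_compat_l; lra).
  assert (wr_const * growth ^ j <= growth * growth ^ j) by (apply Rmult_le_compat_r; lra).
  assert (0 <= Rabs q * (growth * growth ^ j)) by (apply Rmult_le_pos; [apply Rabs_pos|nra]).
  unfold bound_b. lra.
Qed.

Lemma coef_bounded_all k : coef_bounded bound_a bound_b growth k.
Proof.
  induction k as [|[|j] IH].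
  - intros i Hi. lia.
  - exact coef_bounded_1.
  - now apply coef_bounded_succ.
Qed.

Lemma coef_geometric k :
  Rabs (coef_a k) <= (1 + bound_a + bound_b) * growth ^ k /\
  Rabs (coef_b k) <= (1 + bound_a + bound_b) * growth ^ k.
Proof.
  destruct bound_consts as (HA & HB & HL & HC & HE & HG & HM & HMs & HmA).
  pose proof (pow_M_pos growth HM k).
  destruct k as [|k].
  - rewrite coef_a_0, coef_b_0, Rabs_R1. simpl. lra.
  - destruct (coef_bounded_all (S k) (S k) ltac:(lia)) as [Ha Hb].
    replace (S k - 1)%nat with k in Ha, Hb by lia.
    pose proof (pow_M_pos growth HM k).
    pose proof (weight_le_1 (S k)). pose proof (weight_pos (S k)).
    assert (growth ^ k <= growth ^ S k) by (apply pow_M_le; auto).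
    assert (bound_a * growth ^ k * weight (S k) <= bound_a * growth ^ k)
      by (rewrite <- (Rmult_1_r (bound_a * growth ^ k)) at 2;
          apply Rmult_le_compat_l; [apply Rmult_le_pos|]; lra).
    assert (bound_a * growth ^ k <= bound_a * growth ^ S k) by (apply Rmult_le_compat_l; lra).
    assert (bound_b * growth ^ k <= bound_b * growth ^ S k) by (apply Rmult_le_compat_l; lra).
    split; nra.
Qed.

Lemma wr_coef_PS_mult a b k :
  wr_coef a b k = PS_mult a (euler b) k - p * PS_mult (euler a) b k.
Proof.
  unfold PS_mult, euler. rewrite scal_sum, <- minus_sum.
  apply sum_eq. intros i Hi. ring.
Qed.

Definition radius : R := / growth.

Lemma radius_pos : 0 < radius.
Proof.
  destruct bound_consts as (_ & _ & _ & _ & _ & _ & HM & _). apply Rinv_0_lt_compat. lra.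
Qed.

Lemma CV_radius_coef x : 0 <= x < radius ->
  Rbar_lt (Rabs x) (CV_radius coef_a) /\ Rbar_lt (Rabs x) (CV_radius coef_b) /\
  Rbar_lt (Rabs x) (CV_radius (euler coef_a)) /\
  Rbar_lt (Rabs x) (CV_radius (euler (euler coef_a))) /\
  Rbar_lt (Rabs x) (CV_radius (euler coef_b)).
Proof.
  destruct bound_consts as (_ & _ & _ & _ & _ & _ & HM & _).
  intros Hx. rewrite !CV_radius_euler, Rabs_pos_eq by lra.
  assert (Hr : forall c, (forall k, Rabs (c k) <= (1 + bound_a + bound_b) * growth ^ k) ->
    Rbar_lt x (CV_radius c)).
  { intros c Hc. pose proof (CV_radius_ge_geometric c _ growth ltac:(lra) Hc) as H.
    destruct (CV_radius c) as [r| |]; simpl in *; unfold radius in Hx; lra. }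
  refine (conj _ (conj _ (conj _ (conj _ _)))); apply Hr; intros k; apply coef_geometric.
Qed.

(* Coefficientwise, this is [lin_coef_succ]. *)
Lemma lin_identity x : 0 <= x < radius ->
  (1 + x) ^ 2 * (4 * m ^ 2 * PSeries (euler (euler coef_a)) x
                 + 2 * m * al * PSeries (euler coef_a) x
     - PSeries coef_a x + PSeries coef_b x) + n * x * PSeries coef_a x = 0.
Proof.
  intros Hx. destruct (CV_radius_coef x Hx) as (ra & rb & rDa & rDDa & _).
  set (SE := 4 * m ^ 2 * PSeries (euler (euler coef_a)) x + 2 * m * al * PSeries (euler coef_a) x
     - PSeries coef_a x + PSeries coef_b x).
  assert (HE : is_pseries (lin_coef coef_a coef_b) x SE).
  { assert (H := is_pseries_plus' _ _ _ _ _
      (is_pseries_plus' _ _ _ _ _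
        (is_pseries_plus' _ _ _ _ _
          (is_pseries_scal' (4 * m ^ 2) _ _ _ (is_pseries_PSeries _ x rDDa))
          (is_pseries_scal' (2 * m * al) _ _ _ (is_pseries_PSeries _ x rDa)))
        (is_pseries_scal' (-1) _ _ _ (is_pseries_PSeries _ x ra)))
      (is_pseries_PSeries _ x rb)).
    replace SE with (4 * m ^ 2 * PSeries (euler (euler coef_a)) x
      + 2 * m * al * PSeries (euler coef_a) x + -1 * PSeries coef_a x + PSeries coef_b x)
      by (unfold SE; ring).
    eapply is_pseries_ext; [|exact H]. intros k. unfold lin_coef, symbol, euler. simpl. ring. }
  assert (HZ := is_pseries_plus' _ _ _ _ _
    (is_pseries_plus' _ _ _ _ _
      (is_pseries_plus' _ _ _ _ _ HE (is_pseries_scal' 2 _ _ _ (is_pseries_incr_1' _ _ _ HE)))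
      (is_pseries_incr_1' _ _ _ (is_pseries_incr_1' _ _ _ HE)))
    (is_pseries_scal' n _ _ _ (is_pseries_incr_1' _ _ _ (is_pseries_PSeries coef_a x ra)))).
  apply is_pseries_0 in HZ.
  - rewrite <- HZ. unfold SE. ring.
  - intros [|k]; simpl.
    + rewrite lin_coef_0. ring.
    + rewrite lin_coef_succ. unfold lin_rhs. destruct k; simpl; ring.
Qed.

(* Coefficientwise, this is [wr_coef_succ]. *)
Lemma wr_identity x : 0 <= x < radius ->
  (1 + x) * (PSeries coef_a x * PSeries (euler coef_b) x
             - p * (PSeries (euler coef_a) x * PSeries coef_b x))
   = q * x * (PSeries coef_a x * PSeries coef_b x).
Proof.
  intros Hx. destruct (CV_radius_coef x Hx) as (ra & rb & rDa & _ & rDb).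
  assert (H1 := is_pseries_mult _ _ x _ _
    (is_pseries_PSeries _ x ra) (is_pseries_PSeries _ x rDb) ra rDb).
  assert (H2 := is_pseries_mult _ _ x _ _
    (is_pseries_PSeries _ x rDa) (is_pseries_PSeries _ x rb) rDa rb).
  assert (H3 := is_pseries_mult _ _ x _ _
    (is_pseries_PSeries _ x ra) (is_pseries_PSeries _ x rb) ra rb).
  set (SW := PSeries coef_a x * PSeries (euler coef_b) x
             - p * (PSeries (euler coef_a) x * PSeries coef_b x)).
  assert (HW : is_pseries (wr_coef coef_a coef_b) x SW).
  { assert (H := is_pseries_plus' _ _ _ _ _ H1 (is_pseries_scal' (- p) _ _ _ H2)).
    replace SW with (PSeries coef_a x * PSeries (euler coef_b) x
      + - p * (PSeries (euler coef_a) x * PSeries coef_b x)) by (unfold SW; ring).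
    eapply is_pseries_ext; [|exact H]. intros k. rewrite wr_coef_PS_mult. simpl. ring. }
  assert (HZ := is_pseries_plus' _ _ _ _ _
    (is_pseries_plus' _ _ _ _ _ HW (is_pseries_incr_1' _ _ _ HW))
    (is_pseries_scal' (- q) _ _ _ (is_pseries_incr_1' _ _ _ H3))).
  apply is_pseries_0 in HZ.
  - unfold SW in *. lra.
  - intros [|k]; simpl.
    + rewrite wr_coef_0. ring.
    + rewrite wr_coef_succ. ring.
Qed.

Definition y_series (t : R) : R := PSeries coef_a (exp (2 * m * t)).
Definition dy_series (t : R) : R := 2 * m * PSeries (euler coef_a) (exp (2 * m * t)).
Definition ddy_series (t : R) : R :=
  2 * m * (2 * m * PSeries (euler (euler coef_a)) (exp (2 * m * t))).
Definition w_series (t : R) : R := PSeries coef_b (exp (2 * m * t)).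
Definition dw_series (t : R) : R := 2 * m * PSeries (euler coef_b) (exp (2 * m * t)).

Lemma series_derivable t : exp (2 * m * t) < radius ->
  derivable_pt_lim y_series t (dy_series t) /\ derivable_pt_lim dy_series t (ddy_series t) /\
  derivable_pt_lim w_series t (dw_series t).
Proof.
  intros Hx. pose proof (exp_pos (2 * m * t)).
  destruct (CV_radius_coef (exp (2 * m * t)) ltac:(lra)) as (ra & rb & rDa & rDDa & _).
  split; [|split].
  - now apply derivable_pt_lim_PSeries_exp.
  - apply (derivable_pt_lim_scal' (2 * m) (fun t => PSeries (euler coef_a) (exp (2 * m * t)))).
    now apply derivable_pt_lim_PSeries_exp.
  - now apply derivable_pt_lim_PSeries_exp.
Qed.

Lemma lim_y_series : lim_minus_infty y_series 1.
Proof.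
  replace 1 with (PSeries coef_a 0) by (rewrite PSeries_0; apply coef_a_0).
  apply (lim_minus_infty_comp_exp (PSeries coef_a)); [lra|].
  apply PSeries_continuity. apply CV_radius_coef. pose proof radius_pos. lra.
Qed.

Lemma near_y_series : near_minus_infty (fun t => exp (2 * m * t) < radius /\ 1 / 2 < y_series t).
Proof.
  apply near_minus_infty_and.
  - apply near_minus_infty_exp_lt; [lra|apply radius_pos].
  - apply (near_minus_infty_impl (fun t => Rabs (y_series t - 1) < 1 / 2));
      [|apply lim_y_series; lra].
    intros t Ht. apply Rabs_lt_between' in Ht. lra.
Qed.

(* [wr_identity] says exactly that this quotient is constant. *)
Definition w_ratio (t : R) : R :=
  w_series t * Rpower (1 + exp (2 * m * t)) (- q) * Rpower (y_series t) (- p).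

Lemma w_ratio_derivable t : exp (2 * m * t) < radius -> 0 < y_series t ->
  derivable_pt_lim w_ratio t 0.
Proof.
  intros Hx Hy. pose proof (exp_pos (2 * m * t)).
  destruct (series_derivable t Hx) as (Dy & _ & Dw).
  pose proof (wr_identity (exp (2 * m * t)) ltac:(lra)) as Hid.
  assert (D1 : derivable_pt_lim (fun t => Rpower (1 + exp (2 * m * t)) (- q)) t
      (- q * Rpower (1 + exp (2 * m * t)) (- q - 1) * (0 + 2 * m * exp (2 * m * t)))).
  { apply (derivable_pt_lim_comp' (fun z => Rpower z (- q)) (fun t => 1 + exp (2 * m * t))).
    - apply derivable_pt_lim_plus'; [apply derivable_pt_lim_const|apply derivable_pt_lim_exp_scal].
    - apply derivable_pt_lim_power. lra. }
  assert (D2 : derivable_pt_lim (fun t => Rpower (y_series t) (- p)) t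
      (- p * Rpower (y_series t) (- p - 1) * dy_series t)).
  { apply (derivable_pt_lim_comp' (fun z => Rpower z (- p)) y_series); auto.
    apply derivable_pt_lim_power. lra. }
  eapply derivable_pt_lim_val; [|apply (derivable_pt_lim_mult'
    (fun t => w_series t * Rpower (1 + exp (2 * m * t)) (- q))
    (fun t => Rpower (y_series t) (- p)));
    [apply (derivable_pt_lim_mult' w_series); [exact Dw|exact D1]|exact D2]].
  rewrite !Rpower_pred by lra.
  unfold dy_series, dw_series, w_series, y_series in *.
  set (x := exp (2 * m * t)) in *.
  set (Sa := PSeries coef_a x) in *. set (Sb := PSeries coef_b x) in *.
  set (SDa := PSeries (euler coef_a) x) in *. set (SDb := PSeries (euler coef_b) x) in *.
  assert (0 < Rpower (1 + x) (- q)) by apply exp_pos.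
  assert (0 < Rpower Sa (- p)) by apply exp_pos.
  transitivity (2 * m * Rpower (1 + x) (- q) * Rpower Sa (- p) / ((1 + x) * Sa)
    * ((1 + x) * (Sa * SDb - p * (SDa * Sb)) - q * x * (Sa * Sb))).
  - rewrite Hid. field. split; lra.
  - field. split; lra.
Qed.

Lemma lim_w_ratio : lim_minus_infty w_ratio 1.
Proof.
  set (G := fun x => PSeries coef_b x * Rpower (1 + x) (- q) * Rpower (PSeries coef_a x) (- p)).
  assert (HG0 : G 0 = 1).
  { unfold G. rewrite !PSeries_0, coef_a_0, coef_b_0, Rplus_0_r, !Rpower_1_l. ring. }
  rewrite <- HG0. apply (lim_minus_infty_comp_exp G); [lra|].
  pose proof radius_pos.
  destruct (CV_radius_coef 0 ltac:(lra)) as (ra & rb & _).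
  apply derivable_continuous_pt. eexists. unfold G.
  apply (derivable_pt_lim_mult' (fun x => PSeries coef_b x * Rpower (1 + x) (- q))).
  - apply (derivable_pt_lim_mult' (PSeries coef_b)).
    + now apply is_derive_Reals, is_derive_PSeries.
    + apply (derivable_pt_lim_comp' (fun z => Rpower z (- q)) (fun x => 1 + x)).
      * apply derivable_pt_lim_plus'; [apply derivable_pt_lim_const|apply derivable_pt_lim_id].
      * apply derivable_pt_lim_power. lra.
  - apply (derivable_pt_lim_comp' (fun z => Rpower z (- p)) (PSeries coef_a)).
    + now apply is_derive_Reals, is_derive_PSeries.
    + apply derivable_pt_lim_power. rewrite PSeries_0, coef_a_0. lra.
Qed.

Theorem power_series_solution : exists T,
  (forall t, t <= T ->
     derivable_pt_lim y_series t (dy_series t) /\ derivable_pt_lim dy_series t (ddy_series t) /\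
     ddy_series t + al * dy_series t - y_series t
       + Rpower (1 + exp (2 * m * t)) q * Rpower (y_series t) p
       + n * exp (2 * m * t) / (1 + exp (2 * m * t)) ^ 2 * y_series t = 0) /\
  lim_minus_infty y_series 1.
Proof.
  destruct near_y_series as [T HT]. exists T. split; [|exact lim_y_series].
  intros t Ht. destruct (HT t Ht) as [Hx Hy].
  destruct (series_derivable t Hx) as (Dy & Ddy & _). split; [exact Dy|split; [exact Ddy|]].
  assert (Hratio : w_ratio t = 1).
  { apply (eq_lim_of_derivable_zero w_ratio 1 T lim_w_ratio); auto.
    intros s Hs. destruct (HT s Hs). apply w_ratio_derivable; lra. }
  assert (Hw : w_series t = Rpower (1 + exp (2 * m * t)) q * Rpower (y_series t) p).
  { unfold w_ratio in Hratio. rewrite !Rpower_Ropp in Hratio.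
    assert (0 < Rpower (1 + exp (2 * m * t)) q) by apply exp_pos.
    assert (0 < Rpower (y_series t) p) by apply exp_pos.
    apply (Rmult_eq_reg_r (/ Rpower (1 + exp (2 * m * t)) q * / Rpower (y_series t) p)).
    - rewrite <- Rmult_assoc, Hratio. field. split; lra.
    - apply Rmult_integral_contrapositive. split; apply Rinv_neq_0_compat; lra. }
  rewrite <- Hw. pose proof (exp_pos (2 * m * t)).
  pose proof (lin_identity (exp (2 * m * t)) ltac:(lra)) as Hid.
  unfold ddy_series, dy_series, y_series, w_series in *.
  apply (Rmult_eq_reg_r ((1 + exp (2 * m * t)) ^ 2)); [|nra].
  rewrite Rmult_0_l, <- Hid. field. lra.
Qed.

End PowerSeriesSolution.

Theorem lemma4p2 (N : nat) (p : R) :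
  (3 <= N)%nat -> pS N < p ->
  (exists (T : R) (y : R -> R), is_solution N p y T) /\
  (forall (y z : R -> R) (T1 T2 : R),
     is_solution N p y T1 -> is_solution N p z T2 ->
     exists T' : R, forall t, t <= T' -> y t = z t).
Proof.
  intros HN Hp. pose proof (pS_gt_1 N HN) as HpS. pose proof (alpha_const_pos N p HN Hp) as Hal.
  split.
  - set (n := INR N * (INR N - 2)).
    assert (Hn : 0 <= n) by (apply le_INR in HN; simpl in HN; unfold n; nra).
    destruct (power_series_solution (m_const N p) (alpha_const N p) n (q_const N p) p
      (m_const_pos N p) ltac:(lra) ltac:(lra) Hn) as [T [Hode Hlim]].
    eexists T, _. split; [|exact Hlim].
    eexists _, _. intros t Ht. destruct (Hode t Ht) as (D1 & D2 & E).
    split; [exact D1|split; [exact D2|]].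
    unfold powp, B0, Defs.B1. fold n. lra.
  - intros y z T1 T2 Hy Hz. exact (is_solution_unique N p y z T1 T2 ltac:(lra) Hal Hy Hz).
Qed.
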